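(* Let $M$ be an infinite-horizon $\gamma$-discounted zero-sum NMG with $n$ players and let $\pi$ be an $\epsilon$-approximate Markov CCE of $M$. Let $\hat\pi$ be the product Markov policy obtained by marginalizing $\pi$ at each state, i.e. $\hat\pi_h(\mathbf a\mid s)=\prod_{i\in\mathcal N}\pi_{h,i}(a_i\mid s)$ where $\pi_{h,i}(\cdot\mid s)$ is the marginal of $\pi_h(\cdot\mid s)\in\Delta(\mathcal A)$ on $\mathcal A_i$. Then $\hat\pi$ is an $\frac{(n+1)\epsilon}{1-\gamma}$-approximate Markov NE of $M$. Similarly, for a finite-horizon ($H$-step) zero-sum NMG, marginalizing an $\epsilon$-approximate Markov CCE at each state and step yields an $(n+1)H\epsilon$-approximate Markov NE.
   Context: A Markov game has players $\mathcal N=[n]$, finite states $\mathcal S$, finite actions $\mathcal A=\prod_i\mathcal A_i$, transitions $\mathbb P_h$, bounded rewards $r_{h,i}$, discount $\gamma$ (infinite horizon: $H=\infty$, $\gamma<1$, time-independent $\mathbb P,r_i$; finite horizon: $H<\infty$). A joint Markov policy is $\pi=\{\pi_h:\mathcal S\to\Delta(\mathcal A)\}_h$ (possibly correlated); a product policy has $\pi_h(s)\in\prod_i\Delta(\mathcal A_i)$. $V^\pi_{h,i}(s)=\mathbb E_\pi[\sum_{h'\ge h}\gamma^{h'-h}r_{h',i}(s_{h'},\mathbf a_{h'})\mid s_h=s]$. For a player $i$ and a Markov policy $\mu_i$ of player $i$, $(\mu_i,\pi_{-i})$ means $i$ plays $\mu_i$ while the others play the marginal of $\pi$ on $\mathcal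 A_{-i}$ at each state and step. A joint Markov policy $\pi$ is an $\epsilon$-approximate Markov (perfect) CCE if $\max_i\max_{\mu_i}(V^{\mu_i,\pi_{-i}}_{h,i}(\rho)-V^\pi_{h,i}(\rho))\le\epsilon$ for all state distributions $\rho$ and all steps $h$ (where $V(\rho)=\mathbb E_{s\sim\rho}V(s)$); it is an $\epsilon$-approximate Markov (perfect) NE if moreover it is a product policy. A Markov game is a zero-sum NMG with respect to an undirected connected graph $(\mathcal N,\mathcal E_Q)$ (with $\mathcal E_{Q,i}$ the neighbors of $i$) if for every (sequence of) functions $V:\mathcal S\to\mathbb R$, the functions $Q_{h,i}^V(s,\mathbf a)=r_{h,i}(s,\mathbf a)+\gamma\sum_{s'}\mathbb P_h(s'\mid s,\mathbf a)V_{h+1}(s')$ can be written as $\sum_{j\in\mathcal E_{Q,i}}Q^V_{h,i,j}(s,a_i,a_j)$ for some functions $Q^V_{h,i,j}$, and for $V\equiv0$ these pairwise functions satisfy $\sum_i\sum_{j\in\mathcal E_{Q,i}}Q^{\mathbf 0}_{h,i,j}(s,a_i,a_j)=0$ for all $s,h,\mathbf a$. *)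

From HB Require Import structures.
From mathcomp Require Import all_boot all_order all_algebra.
From mathcomp Require Import boolp classical_sets reals topology normedtype sequences.
Set Implicit Arguments. Unset Strict Implicit. Unset Printing Implicit Defensive.
Import Order.TTheory GRing.Theory Num.Theory.
Import numFieldNormedType.Exports.
Local Open Scope ring_scope.

Section MarkovGames.
Variable R : realType.
Variable n : nat.
Variable S : finType.
Variable A : 'I_n -> finType.

Definition joint := {dffun forall i : 'I_n, A i}.

Definition is_dist (T : finType) (d : T -> R) :=
  (forall x, 0 <= d x) /\ \sum_x d x = 1.

(* (possibly correlated) joint Markov policy: pi h s a = pi_h(a | s) *)
Definition policy := nat -> S -> joint -> R.
Definition ppolicy (i : 'I_n) := nat -> S -> A i -> R.
(* transitions P h s a s' = P_h(s' | s, a) and rewards r h i s a = r_{h,i}(s,a) *)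
Definition trans := nat -> S -> joint -> S -> R.
Definition reward := nat -> 'I_n -> S -> joint -> R.

Definition valid_policy (steps : pred nat) (pi : policy) :=
  forall h, steps h -> forall s, is_dist (pi h s).

(* distribution of s_{h+k} when s_h ~ rho and pi is played from step h on *)
Fixpoint state_dist (P : trans) (pi : policy) (h : nat) (rho : S -> R) (k : nat)
  : S -> R :=
  match k with
  | 0 => rho
  | k'.+1 => fun s' => \sum_s \sum_(a : joint)
       state_dist P pi h rho k' s * pi (h + k')%N s a * P (h + k')%N s a s'
  end.

Definition exp_reward (r : reward) (i : 'I_n) (pi : policy) (t : nat) (d : S -> R) :=
  \sum_s \sum_(a : joint) d s * pi t s a * r t i s a.

Definition disc_term (P : trans) (r : reward) (gamma : R) (pi : policy)
  (i : 'I_n) (h : nat) (rho : S -> R) (k : nat) :=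
  gamma ^+ k * exp_reward r i pi (h + k)%N (state_dist P pi h rho k).

(* finite horizon (steps 0 .. H-1, V_H = 0): V^pi_{h,i}(rho) *)
Definition Vfin (H : nat) (P : trans) (r : reward) (gamma : R)
  (pi : policy) (i : 'I_n) (h : nat) (rho : S -> R) : R :=
  \sum_(0 <= k < H - h) disc_term P r gamma pi i h rho k.

Definition Vinf (P : trans) (r : reward) (gamma : R)
  (pi : policy) (i : 'I_n) (h : nat) (rho : S -> R) : R :=
  limn (fun N => \sum_(0 <= k < N) disc_term P r gamma pi i h rho k).

(* (mu_i, pi_{-i}): i plays mu_i, the others play the marginal of pi on A_{-i} *)
Definition dev (i : 'I_n) (mu : ppolicy i) (pi : policy) : policy :=
  fun h s a => mu h s (a i) *
    \sum_(b : joint | [forall j, (j != i) ==> (b j == a j)]) pi h s b.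

Definition marg (i : 'I_n) (pi : policy) (h : nat) (s : S) (x : A i) : R :=
  \sum_(b : joint | b i == x) pi h s b.

Definition prod_marg (pi : policy) : policy :=
  fun h s a => \prod_(i : 'I_n) marg pi h s (a i).

Definition is_product (steps : pred nat) (pi : policy) :=
  forall h, steps h -> forall s, exists sigma : forall i : 'I_n, A i -> R,
    (forall i, is_dist (sigma i)) /\ forall a : joint, pi h s a = \prod_i sigma i (a i).

Definition valfun := policy -> 'I_n -> nat -> (S -> R) -> R.

Definition is_CCE (V : valfun) (steps : pred nat) (eps : R) (pi : policy) :=
  forall (i : 'I_n) (mu : ppolicy i),
    (forall h, steps h -> forall s, is_dist (mu h s)) ->
  forall rho : S -> R, is_dist rho ->
  forall h, steps h -> V (dev mu pi) i h rho - V pi i h rho <= eps.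

Definition is_NE (V : valfun) (steps : pred nat) (eps : R) (pi : policy) :=
  is_CCE V steps eps pi /\ is_product steps pi.

Definition Qfun (P : trans) (r : reward) (gamma : R) (h : nat) (i : 'I_n)
  (Vnext : S -> R) (s : S) (a : joint) : R :=
  r h i s a + gamma * \sum_s' P h s a s' * Vnext s'.

Definition connected_graph (E : rel 'I_n) :=
  symmetric E /\ irreflexive E /\ (forall i j, connect E i j).

Definition zs_NMG (steps : pred nat) (P : trans) (r : reward) (gamma : R) :=
  exists E : rel 'I_n, connected_graph E /\
    (forall h, steps h -> forall (V : nat -> S -> R) (i : 'I_n),
       exists Q : forall j : 'I_n, S -> A i -> A j -> R,
         forall s (a : joint),
           Qfun P r gamma h i (V h.+1) s a = \sum_(j | E i j) Q j s (a i) (a j)) /\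
    (forall h, steps h ->
       exists Q0 : forall i j : 'I_n, S -> A i -> A j -> R,
         (forall i s (a : joint),
            Qfun P r gamma h i (fun _ => 0) s a = \sum_(j | E i j) Q0 i j s (a i) (a j)) /\
         (forall s (a : joint),
            \sum_(i : 'I_n) \sum_(j | E i j) Q0 i j s (a i) (a j) = 0)).

End MarkovGames.

From HB Require Import structures.
From mathcomp Require Import all_boot all_order all_algebra.
From mathcomp Require Import boolp classical_sets reals topology normedtype sequences.
From mathcomp Require Import ring lra.
Import Order.TTheory GRing.Theory Num.Theory.
Import numFieldNormedType.Exports.
Set Implicit Arguments. Unset Strict Implicit. Unset Printing Implicit Defensive.
Local Open Scope ring_scope.

(* In a zero-sum networked game the reward [r_i] and the discounted kernel
   [gamma P] are sums, over the neighbours [j] of [i], of functions of [(a_i, a_j)].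
   Step by step, the value [V_i] of a policy therefore depends only on its pair
   marginals on [A_i * A_j], [j] a neighbour of [i].  The deviations [(mu, pi^_-i)]
   and [(mu, pi_-i)] have the same such marginals [mu * pi_j], and so do [pi^] and
   [(pi_j, pi_-j)], namely [pi_j * pi_l].  Hence deviating against [pi^] gains as
   much as deviating against [pi], and [V_j(pi^) = V_j(pi_j, pi_-j) <= V_j(pi) + eps].
   Since [sum_j V_j = 0] for every policy, [V_i(pi) - V_i(pi^) <= (n - 1) eps], so no
   deviation gains more than [n eps] against [pi^]. *)

Section ProductSums.
Variables (R : comPzSemiRingType) (I : finType) (T_ : I -> finType).
Local Notation dfprod := {dffun forall i : I, T_ i}.
Local Notation tagT := (Tagged (fun i => T_ i)).

Lemma prod_sum_dffun (F : forall i, T_ i -> R) :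
  \prod_i \sum_(z : T_ i) F i z = \sum_(a : dfprod) \prod_i F i (a i).
Proof.
pose F' i := [ffun z : T_ i => F i z].
have -> : \prod_i \sum_(z : T_ i) F i z = \prod_i \sum_(z : T_ i) F' i z.
  by apply: eq_bigr => i _; apply: eq_bigr => z _; rewrite ffunE.
under [RHS]eq_bigr do under eq_bigr do rewrite -[F _ _](ffunE (F _)).
under eq_bigr do rewrite (big_tag F').
rewrite bigA_distr_big_dep -(@big_fprod _ 0 1 *%R +%R _ T_ F').
rewrite (reindex (@fprod_of_dffun _ T_)); last exact/onW_bij/fprod_of_dffun_bij.
by apply: eq_bigr => a _; apply: eq_bigr => i _; rewrite fprodE.
Qed.

Lemma sum_prod_dffun_cond (C : pred dfprod) (c : forall i, pred (T_ i))
    (G : forall i, T_ i -> R) :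
  (forall a, C a = [forall i, c i (a i)]) ->
  \sum_(a | C a) \prod_i G i (a i) = \prod_i \sum_(z | c i z) G i z.
Proof.
move=> CE; rewrite big_mkcond /=; under [RHS]eq_bigr do rewrite big_mkcond /=.
rewrite prod_sum_dffun; apply: eq_bigr => a _; rewrite CE.
have [/forallP ca|/forallPn [i nca]] := boolP [forall i, c i (a i)].
  by apply: eq_bigr => i _; rewrite ca.
by rewrite (bigD1 i) //= (negbTE nca) mul0r.
Qed.

(* [z : T_ k] and [x : T_ i] live in different types, so they are compared through their tags. *)
Definition at_coord i (x : T_ i) k (z : T_ k) := (k != i) || (tagT z == tagT x).
Arguments at_coord {i} x {k} z.

Lemma forall_at_coord (a : dfprod) i (x : T_ i) :
  [forall k, at_coord x (a k)] = (a i == x).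
Proof.
apply/forallP/eqP => [/(_ i)|<- k]; first by rewrite /at_coord eqxx eq_Tagged => /eqP.
by rewrite /at_coord; case: eqP => //= ->.
Qed.

Lemma sum_at_coord_in i (x : T_ i) (F : T_ i -> R) :
  \sum_(z | at_coord x z) F z = F x.
Proof.
by rewrite (eq_bigl (pred1 x)) ?big_pred1_eq // => z; rewrite /at_coord eqxx eq_Tagged.
Qed.

Lemma sum_at_coord_out i (x : T_ i) k (F : T_ k -> R) :
  k != i -> \sum_(z | at_coord x z) F z = \sum_z F z.
Proof. by move=> ki; apply: eq_bigl => z; rewrite /at_coord ki. Qed.

Lemma marginal_prod_dffun (m : forall i, T_ i -> R) j (y : T_ j) :
  (forall i, \sum_(z : T_ i) m i z = 1) ->
  \sum_(a : dfprod | a j == y) \prod_i m i (a i) = m j y.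
Proof.
move=> sum_m; rewrite (@sum_prod_dffun_cond _ (fun k => at_coord y)); last first.
  by move=> a; rewrite forall_at_coord.
rewrite (bigD1 j) //= sum_at_coord_in big1 ?mulr1 // => k kj.
by rewrite sum_at_coord_out.
Qed.

Lemma pair_marginal_prod_dffun (m : forall i, T_ i -> R) i j (x : T_ i) (y : T_ j) :
  (forall i, \sum_(z : T_ i) m i z = 1) -> i != j ->
  \sum_(a : dfprod | (a i == x) && (a j == y)) \prod_k m k (a k) = m i x * m j y.
Proof.
move=> sum_m ij.
rewrite (@sum_prod_dffun_cond _ (fun k z => at_coord x z && at_coord y z)); last first.
  move=> a; rewrite -!forall_at_coord.
  apply/andP/forallP => [[/forallP c1 /forallP c2] k|c]; first by rewrite c1 c2.
  by split; apply/forallP => k; case/andP: (c k).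
rewrite (bigD1 i) // (bigD1 j) 1?eq_sym //= [X in _ * (_ * X)]big1 ?mulr1; last first.
  by move=> k /andP [ki kj]; rewrite (eq_bigl predT) // => z; rewrite /at_coord ki kj.
congr (_ * _).
  rewrite -(sum_at_coord_in x (m i)); apply: eq_bigl => z.
  by rewrite [at_coord y z]/at_coord ij andbT.
rewrite -(sum_at_coord_in y (m j)); apply: eq_bigl => z.
by rewrite [at_coord x z]/at_coord eq_sym ij.
Qed.

Definition dfupd (b : dfprod) i (x : T_ i) : dfprod := finfun (dfwith b x).

Lemma dfupd_in (b : dfprod) i (x : T_ i) : dfupd b x i = x.
Proof. by rewrite ffunE dfwith_in. Qed.

Lemma dfupd_out (b : dfprod) i (x : T_ i) k : i != k -> dfupd b x k = b k.
Proof. by move=> ik; rewrite ffunE dfwith_out. Qed.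

Definition agree_off i (b a : dfprod) := [forall k, (k != i) ==> (b k == a k)].

Lemma agree_off_at i (b a : dfprod) (x : T_ i) :
  agree_off i b a && (a i == x) = (a == dfupd b x).
Proof.
apply/andP/eqP => [[/forallP ab /eqP ax]|->].
  apply/ffunP => k; rewrite ffunE; case: dfwithP => // k' ik.
  by apply/esym/eqP; move: (ab k'); rewrite eq_sym ik.
rewrite dfupd_in; split => //; apply/forallP => k; apply/implyP => ki.
by rewrite dfupd_out // eq_sym.
Qed.

Lemma sum_agree_off_cond i (b : dfprod) (C : pred dfprod) (F : dfprod -> R) :
  \sum_(a | C a && agree_off i b a) F a =
  \sum_(x : T_ i | C (dfupd b x)) F (dfupd b x).
Proof.
rewrite (partition_big (fun a : dfprod => a i) predT) // [RHS]big_mkcond /=.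
apply: eq_bigr => x _; rewrite (eq_bigl (fun a => (a == dfupd b x) && C a)).
  by rewrite big_mkcondr big_pred1_eq.
by move=> a; rewrite -agree_off_at; case: (C a); rewrite /= ?andbT ?andbF.
Qed.

Lemma pair_marginal_agree_off i j (x : T_ i) (y : T_ j) (mu : T_ i -> R) (d : dfprod -> R) :
  i != j ->
  \sum_(a : dfprod | (a i == x) && (a j == y)) mu (a i) * \sum_(b | agree_off i b a) d b =
  mu x * \sum_(b : dfprod | b j == y) d b.
Proof.
move=> ij; under eq_bigr do rewrite big_distrr /=.
rewrite (exchange_big_dep predT) //= big_distrr /= [RHS]big_mkcond /=.
apply: eq_bigr => b _.
rewrite sum_agree_off_cond /= (eq_bigl (fun z => (z == x) && (b j == y))); last first.
  by move=> z; rewrite dfupd_in dfupd_out.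
case: (b j == y); last by rewrite big_pred0 // => z; rewrite andbF.
by rewrite (eq_bigl (pred1 x)) ?big_pred1_eq ?dfupd_in // => z; rewrite andbT.
Qed.

End ProductSums.

Section Policies.
Variables (R : realType) (n : nat) (S : finType) (A : 'I_n -> finType).
Local Notation joint := (joint A).
Local Notation policy := (policy R S A).

Definition pair_marg (d : joint -> R) (i j : 'I_n) (x : A i) (y : A j) :=
  \sum_(a : joint | (a i == x) && (a j == y)) d a.

Lemma expect_pair_marg (d : joint -> R) (i j : 'I_n) (G : A i -> A j -> R) :
  \sum_(a : joint) d a * G (a i) (a j) = \sum_(x : A i) \sum_(y : A j) G x y * pair_marg d x y.
Proof.
rewrite (partition_big (fun a : joint => a i) predT) //=; apply: eq_bigr => x _.
rewrite (partition_big (fun a : joint => a j) predT) //=; apply: eq_bigr => y _.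
rewrite /pair_marg big_distrr /=.
by apply: eq_bigr => a /andP [/eqP -> /eqP ->]; rewrite mulrC.
Qed.

Definition marg_policy (pi : policy) (j : 'I_n) : ppolicy R S A j := marg pi.

Lemma marg_dist (pi : policy) h s (i : 'I_n) :
  is_dist (pi h s) -> is_dist (marg pi h s (i := i)).
Proof.
move=> [pi_ge0 pi_sum1]; split=> [x|]; first exact: sumr_ge0.
by rewrite -pi_sum1 (partition_big (fun b : joint => b i) predT).
Qed.

Lemma prod_marg_dist (pi : policy) h s :
  is_dist (pi h s) -> is_dist (prod_marg pi h s).
Proof.
move=> pi_dist; split=> [a|].
  by apply: prodr_ge0 => k _; case: (marg_dist k pi_dist).
rewrite /prod_marg -(prod_sum_dffun (fun k => marg pi h s (i := k))).
by apply: big1 => k _; case: (marg_dist k pi_dist).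
Qed.

Lemma marg_prod_marg (pi : policy) h s (j : 'I_n) (y : A j) :
  is_dist (pi h s) -> marg (prod_marg pi) h s y = marg pi h s y.
Proof.
move=> pi_dist; rewrite [LHS]/marg /prod_marg.
apply: (marginal_prod_dffun (m := fun k => marg pi h s (i := k))).
by move=> k; case: (marg_dist k pi_dist).
Qed.

Lemma pair_marg_prod_marg (pi : policy) h s (i j : 'I_n) (x : A i) (y : A j) :
  i != j -> is_dist (pi h s) ->
  pair_marg (prod_marg pi h s) x y = marg pi h s x * marg pi h s y.
Proof.
move=> ij pi_dist; rewrite /pair_marg /prod_marg.
apply: (pair_marginal_prod_dffun (m := fun k => marg pi h s (i := k))) => //.
by move=> k; case: (marg_dist k pi_dist).
Qed.

Lemma pair_marg_dev (pi : policy) h s (i j : 'I_n) (mu : ppolicy R S A i)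
    (x : A i) (y : A j) :
  i != j -> pair_marg (dev mu pi h s) x y = mu h s x * marg pi h s y.
Proof. exact: pair_marginal_agree_off. Qed.

Lemma prod_marg_is_product (steps : pred nat) (pi : policy) :
  valid_policy steps pi -> is_product steps (prod_marg pi).
Proof.
move=> pi_valid h sh s; exists (fun i => marg pi h s (i := i)); split=> // i.
exact: marg_dist (pi_valid h sh s).
Qed.

End Policies.

Arguments marg_policy {R n S A} pi j.

Section NeighbourDecomposition.
Variables (R : realType) (n : nat) (S : finType) (A : 'I_n -> finType).
Local Notation joint := (joint A).

Definition pairwise_sum (E : rel 'I_n) (i : 'I_n) (f : joint -> R) :=
  exists Q : forall j, A i -> A j -> R,
    forall a : joint, f a = \sum_(j | E i j) Q j (a i) (a j).

Lemma pairwise_sumB (E : rel 'I_n) i (f g : joint -> R) :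
  pairwise_sum E i f -> pairwise_sum E i g -> pairwise_sum E i (fun a => f a - g a).
Proof.
move=> [Qf fE] [Qg gE]; exists (fun j x y => Qf j x y - Qg j x y) => a.
by rewrite fE gE sumrB.
Qed.

Lemma expect_pairwise_sum (E : rel 'I_n) i (f d1 d2 : joint -> R) :
  (forall j, E i j -> forall (x : A i) (y : A j), pair_marg d1 x y = pair_marg d2 x y) ->
  pairwise_sum E i f ->
  \sum_(a : joint) d1 a * f a = \sum_(a : joint) d2 a * f a.
Proof.
move=> d12 [Q fE].
have expectE d : \sum_(a : joint) d a * f a =
    \sum_(j | E i j) \sum_(a : joint) d a * Q j (a i) (a j).
  by under eq_bigr do rewrite fE big_distrr /=; rewrite exchange_big.
rewrite !expectE; apply: eq_bigr => j Eij; rewrite !expect_pair_marg.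
by apply: eq_bigr => x _; apply: eq_bigr => y _; rewrite d12.
Qed.

End NeighbourDecomposition.

Section Dynamics.
Variables (R : realType) (n : nat) (S : finType) (A : 'I_n -> finType).
Variables (P : trans R S A) (r : reward R S A) (gamma : R).
Local Notation joint := (joint A).
Local Notation policy := (policy R S A).

(* Discounting is folded into the occupancy because only [gamma * P] is pairwise decomposable. *)
Definition disc_occupancy (p : policy) h (rho : S -> R) k s :=
  gamma ^+ k * state_dist P p h rho k s.

Lemma disc_occupancyS p h rho k s' :
  disc_occupancy p h rho k.+1 s' = \sum_s disc_occupancy p h rho k s *
     \sum_(a : joint) p (h + k)%N s a * (gamma * P (h + k)%N s a s').
Proof.
rewrite /disc_occupancy /= exprSr -mulrA !mulr_sumr; apply: eq_bigr => s _.
rewrite big_distrr /= big_distrr /= [RHS]big_distrr /=; apply: eq_bigr => a _; ring.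
Qed.

Lemma disc_termE p i h rho k :
  disc_term P r gamma p i h rho k =
  \sum_s disc_occupancy p h rho k s * \sum_(a : joint) p (h + k)%N s a * r (h + k)%N i s a.
Proof.
rewrite /disc_term /exp_reward mulr_sumr; apply: eq_bigr => s _.
by rewrite /disc_occupancy !big_distrr /=; apply: eq_bigr => a _; rewrite !mulrA.
Qed.

Lemma eq_disc_term (p1 p2 : policy) i h rho K :
  (forall k, (k < K)%N -> forall s s',
     \sum_(a : joint) p1 (h + k)%N s a * (gamma * P (h + k)%N s a s') =
     \sum_(a : joint) p2 (h + k)%N s a * (gamma * P (h + k)%N s a s')) ->
  (forall k, (k < K)%N -> forall s,
     \sum_(a : joint) p1 (h + k)%N s a * r (h + k)%N i s a =
     \sum_(a : joint) p2 (h + k)%N s a * r (h + k)%N i s a) ->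
  forall k, (k < K)%N -> disc_term P r gamma p1 i h rho k = disc_term P r gamma p2 i h rho k.
Proof.
move=> eq_trans eq_rew.
have eq_occ k : (k <= K)%N -> disc_occupancy p1 h rho k =1 disc_occupancy p2 h rho k.
  elim: k => [//|k IHk] kK s'; rewrite !disc_occupancyS.
  by apply: eq_bigr => s _; rewrite IHk 1?ltnW // eq_trans.
move=> k kK; rewrite !disc_termE; apply: eq_bigr => s _.
by rewrite eq_occ 1?ltnW // eq_rew.
Qed.

Lemma sum_disc_term_eq0 p h rho k :
  (forall s (a : joint), \sum_(i : 'I_n) r (h + k)%N i s a = 0) ->
  \sum_(i : 'I_n) disc_term P r gamma p i h rho k = 0.
Proof.
move=> r_sum0; under eq_bigr do rewrite disc_termE.
rewrite exchange_big big1 // => s _; rewrite -big_distrr /= exchange_big big1 ?mulr0 //.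
by move=> a _; rewrite -big_distrr /= r_sum0 mulr0.
Qed.

End Dynamics.

Section ZeroSumNMG.
Variables (R : realType) (n : nat) (S : finType) (A : 'I_n -> finType).
Local Notation joint := (joint A).
Local Notation policy := (policy R S A).

(* Testing [Qfun] against [V = 0] and against the indicator of [s'] isolates the
   reward and the discounted transition probability to [s']. *)
Lemma zs_NMG_pairwise (steps : pred nat) (P : trans R S A) (r : reward R S A) gamma :
  zs_NMG steps P r gamma ->
  exists E : rel 'I_n, [/\ irreflexive E,
    forall h, steps h -> forall i s, pairwise_sum E i (r h i s) /\
      forall s', pairwise_sum E i (fun a => gamma * P h s a s') &
    forall h, steps h -> forall s (a : joint), \sum_i r h i s a = 0].
Proof.
move=> [E [[_ [E_irr _]] [QV Q0]]].
have QfunV0 h i s a : Qfun P r gamma h i (fun _ => 0) s a = r h i s a.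
  by rewrite /Qfun big1 ?mulr0 ?addr0 // => s' _; rewrite mulr0.
exists E; split=> // [h sh i s|h sh s a].
  have r_pw : pairwise_sum E i (r h i s).
    have [Q QE] := QV h sh (fun _ _ => 0) i.
    by exists (fun j => Q j s) => a; rewrite -QE QfunV0.
  split=> // s'.
  have [Q QE] := QV h sh (fun _ z => (z == s')%:R) i.
  have ind_pw : pairwise_sum E i (Qfun P r gamma h i (fun z => (z == s')%:R) s).
    by exists (fun j => Q j s).
  have [Q' Q'E] := pairwise_sumB ind_pw r_pw.
  exists Q' => a; rewrite -Q'E /Qfun (bigD1 s') //= eqxx mulr1 big1 ?addr0.
    by rewrite addrC addKr.
  by move=> z /negbTE ->; rewrite mulr0.
have [Q [QE Q_sum0]] := Q0 h sh.
by rewrite -[RHS](Q_sum0 s a); apply: eq_bigr => i _; rewrite -QE QfunV0.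
Qed.

Section Window.
Variables (P : trans R S A) (r : reward R S A) (gamma : R) (E : rel 'I_n).
Variables (pi : policy) (h K : nat).
Hypothesis E_irr : irreflexive E.
Hypothesis pw : forall k, (k < K)%N -> forall i s,
  pairwise_sum E i (r (h + k)%N i s) /\
  forall s', pairwise_sum E i (fun a => gamma * P (h + k)%N s a s').
Hypothesis pi_valid : forall k, (k < K)%N -> forall s, is_dist (pi (h + k)%N s).

Lemma disc_term_pair_marg (p1 p2 : policy) i rho :
  (forall k, (k < K)%N -> forall s j, E i j -> forall (x : A i) (y : A j),
     pair_marg (p1 (h + k)%N s) x y = pair_marg (p2 (h + k)%N s) x y) ->
  forall k, (k < K)%N -> disc_term P r gamma p1 i h rho k = disc_term P r gamma p2 i h rho k.
Proof.
move=> p12; apply: eq_disc_term => k kK s; last first.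
  by apply: expect_pairwise_sum; [exact: p12 | case: (pw kK i s)].
by move=> s'; apply: expect_pairwise_sum; [exact: p12 | case: (pw kK i s)].
Qed.

Lemma neighbour_neq i j : E i j -> i != j.
Proof. by apply: contraTneq => ->; rewrite E_irr. Qed.

Lemma disc_term_dev_prod_marg i (mu : ppolicy R S A i) rho k : (k < K)%N ->
  disc_term P r gamma (dev mu (prod_marg pi)) i h rho k =
  disc_term P r gamma (dev mu pi) i h rho k.
Proof.
apply: disc_term_pair_marg => k' k'K s j /neighbour_neq ij x y.
by rewrite !pair_marg_dev // marg_prod_marg //; apply: pi_valid.
Qed.

Lemma disc_term_prod_marg j rho k : (k < K)%N ->
  disc_term P r gamma (prod_marg pi) j h rho k =
  disc_term P r gamma (dev (marg_policy pi j) pi) j h rho k.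
Proof.
apply: disc_term_pair_marg => k' k'K s l /neighbour_neq jl x y.
by rewrite pair_marg_dev // pair_marg_prod_marg //; apply: pi_valid.
Qed.

End Window.

End ZeroSumNMG.

Section Gap.
Variables (R : realType) (n : nat) (S : finType) (A : 'I_n -> finType).

Lemma zero_sum_gap (a b : 'I_n -> R) (c eps : R) (i : 'I_n) :
  \sum_j a j = 0 -> \sum_j b j = 0 -> (forall j, b j - a j <= eps) -> c - a i <= eps ->
  c - b i <= n%:R * eps /\ 0 <= eps.
Proof.
move=> a_sum0 b_sum0 ba_le ca_le.
have slack_sum : \sum_j (eps - (b j - a j)) = n%:R * eps.
  by rewrite !sumrB a_sum0 b_sum0 !subr0 sumr_const card_ord mulr_natl.
have slack_ge0 j : 0 <= eps - (b j - a j) by rewrite subr_ge0.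
have slack_i : eps - (b i - a i) <= n%:R * eps.
  by rewrite -slack_sum (bigD1 i) //= lerDl sumr_ge0.
have n_gt0 : (0 < n)%N by apply: leq_ltn_trans (ltn_ord i).
have : 0 <= n%:R * eps by rewrite -slack_sum sumr_ge0.
rewrite pmulr_rge0 ?ltr0n // => eps_ge0.
by split => //; lra.
Qed.

Lemma prod_marg_gap (V : valfun R S A) steps eps (pi : policy R S A) i
    (mu : ppolicy R S A i) rho h :
  is_CCE V steps eps pi -> valid_policy steps pi ->
  (forall t, steps t -> forall s, is_dist (mu t s)) -> is_dist rho -> steps h ->
  \sum_j V pi j h rho = 0 -> \sum_j V (prod_marg pi) j h rho = 0 ->
  V (dev mu (prod_marg pi)) i h rho = V (dev mu pi) i h rho ->
  (forall j, V (prod_marg pi) j h rho = V (dev (marg_policy pi j) pi) j h rho) ->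
  V (dev mu (prod_marg pi)) i h rho - V (prod_marg pi) i h rho <= n%:R * eps /\ 0 <= eps.
Proof.
move=> cce pi_valid mu_valid rho_dist sh pi_sum0 hat_sum0 dev_eq hat_eq.
rewrite dev_eq; apply: (zero_sum_gap pi_sum0 hat_sum0) => [j|]; last exact: cce.
rewrite hat_eq; apply: cce => // t st s; exact: marg_dist (pi_valid t st s).
Qed.

End Gap.

Section FiniteHorizon.
Variables (R : realType) (n : nat) (S : finType) (A : 'I_n -> finType).
Variables (H : nat) (P : trans R S A) (r : reward R S A) (gamma : R).
Local Notation V := (Vfin H P r gamma).
Local Notation steps := (fun t => (t < H)%N).

Lemma Vfin_prod_marg_gap eps (pi : policy R S A) i (mu : ppolicy R S A i) rho h :
  zs_NMG steps P r gamma -> valid_policy steps pi -> is_CCE V steps eps pi ->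
  (forall t, (t < H)%N -> forall s, is_dist (mu t s)) -> is_dist rho -> (h < H)%N ->
  V (dev mu (prod_marg pi)) i h rho - V (prod_marg pi) i h rho <= n%:R * eps /\ 0 <= eps.
Proof.
move=> nmg pi_valid cce mu_valid rho_dist hH.
have [E [E_irr pw r_sum0]] := zs_NMG_pairwise nmg.
have inH k : (k < H - h)%N -> (h + k < H)%N by rewrite ltn_subRL.
have pw' k kK := pw _ (inH k kK).
have pi_valid' k kK := pi_valid _ (inH k kK).
have V_sum0 p : \sum_j V p j h rho = 0.
  rewrite exchange_big big_nat big1 // => k /andP [_ kK].
  by apply: sum_disc_term_eq0 => s a; apply: r_sum0; apply: inH.
apply: (prod_marg_gap cce pi_valid mu_valid rho_dist hH); rewrite ?V_sum0 //.
- apply: eq_big_nat => k /andP [_ kK].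
  exact: disc_term_dev_prod_marg E_irr pw' pi_valid' _ _ _ _ kK.
- move=> j; apply: eq_big_nat => k /andP [_ kK].
  exact: disc_term_prod_marg E_irr pw' pi_valid' _ _ _ kK.
Qed.

End FiniteHorizon.

Section InfiniteHorizon.
Variables (R : realType) (n : nat) (S : finType) (A : 'I_n -> finType).
Variables (P : trans R S A) (r : reward R S A) (gamma : R).
Local Notation joint := (joint A).
Local Notation policy := (policy R S A).
Local Notation V := (Vinf P r gamma).
Hypothesis P_dist : forall t s a, is_dist (P t s a).

Lemma state_dist_dist (p : policy) h rho :
  (forall t s, is_dist (p t s)) -> is_dist rho -> forall k, is_dist (state_dist P p h rho k).
Proof.
move=> p_dist [rho_ge0 rho_sum1]; elim=> [//|k [d_ge0 d_sum1]]; split.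
  move=> s' /=; apply: sumr_ge0 => s _; apply: sumr_ge0 => a _.
  by rewrite !mulr_ge0 //; [case: (p_dist (h + k)%N s)|case: (P_dist (h + k)%N s a)].
rewrite /= exchange_big /= -[RHS]d_sum1; apply: eq_bigr => s _.
rewrite exchange_big /= -[RHS]mulr1 -(proj2 (p_dist (h + k)%N s)) mulr_sumr.
by apply: eq_bigr => a _; rewrite -mulr_sumr (proj2 (P_dist (h + k)%N s a)) mulr1.
Qed.

Lemma norm_exp_reward_le i (p : policy) t d M :
  (forall s a, `|r t i s a| <= M) -> is_dist d -> (forall s, is_dist (p t s)) ->
  `|exp_reward r i p t d| <= M.
Proof.
move=> r_le [d_ge0 d_sum1] p_dist; rewrite /exp_reward.
apply: le_trans (ler_norm_sum _ _ _) _.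
apply: (@le_trans _ _ (\sum_s \sum_(a : joint) d s * p t s a * M)).
  apply: ler_sum => s _; apply: le_trans (ler_norm_sum _ _ _) _.
  have [p_ge0 _] := p_dist s.
  apply: ler_sum => a _; rewrite normrM ger0_norm ?mulr_ge0 //.
  by rewrite ler_wpM2l ?mulr_ge0.
rewrite -[leRHS]mul1r -d_sum1 mulr_suml; apply: ler_sum => s _.
by rewrite -!mulr_suml -!mulr_sumr (proj2 (p_dist s)) mulr1.
Qed.

Lemma disc_series_cvg (p : policy) i h rho M :
  0 <= gamma < 1 -> (forall t s a, `|r t i s a| <= M) ->
  (forall t s, is_dist (p t s)) -> is_dist rho ->
  cvgn (fun N => \sum_(0 <= k < N) disc_term P r gamma p i h rho k).
Proof.
move=> /andP [gamma_ge0 gamma_lt1] r_le p_dist rho_dist.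
apply: normed_cvg; apply: (@series_le_cvg _ _ (geometric `|M| gamma)) => [k|k|k|].
- exact: normr_ge0.
- by rewrite geometric_ge0.
- rewrite /disc_term /geometric /= normrM ger0_norm ?exprn_ge0 // mulrC.
  rewrite ler_wpM2r ?exprn_ge0 // (le_trans _ (ler_norm M)) //.
  by apply: norm_exp_reward_le => //; apply: state_dist_dist.
- by apply: is_cvg_geometric_series; rewrite ger0_norm.
Qed.

Lemma sum_Vinf_eq0 (p : policy) h rho :
  (forall j, cvgn (fun N => \sum_(0 <= k < N) disc_term P r gamma p j h rho k)) ->
  (forall t s (a : joint), \sum_j r t j s a = 0) ->
  \sum_j V p j h rho = 0.
Proof.
move=> p_cvg r_sum0.
have sum_cvg : (\sum_j (\sum_(0 <= k < N) disc_term P r gamma p j h rho k)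
    @[N --> \oo] --> \sum_j V p j h rho)%classic.
  exact: (cvg_big add_continuous _ (fun j _ => p_cvg j)).
have partial_sum0 : (fun N => \sum_j \sum_(0 <= k < N) disc_term P r gamma p j h rho k)
    = fun=> 0.
  by apply/funext => N; rewrite exchange_big big1 // => k _; apply: sum_disc_term_eq0.
rewrite partial_sum0 in sum_cvg.
exact: (cvg_unique _ sum_cvg (cvg_cst 0)).
Qed.

Lemma eq_Vinf (p1 p2 : policy) j h rho :
  (forall k, disc_term P r gamma p1 j h rho k = disc_term P r gamma p2 j h rho k) ->
  V p1 j h rho = V p2 j h rho.
Proof.
move=> eq12; rewrite /Vinf.
suff -> : (fun N => \sum_(0 <= k < N) disc_term P r gamma p1 j h rho k) =
          (fun N => \sum_(0 <= k < N) disc_term P r gamma p2 j h rho k) by [].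
by apply/funext => N; apply: eq_bigr.
Qed.

Lemma Vinf_prod_marg_gap M eps (pi : policy) i (mu : ppolicy R S A i) rho h :
  0 <= gamma < 1 -> (forall t j s a, `|r t j s a| <= M) ->
  zs_NMG predT P r gamma -> valid_policy predT pi -> is_CCE V predT eps pi ->
  (forall t, predT t -> forall s, is_dist (mu t s)) -> is_dist rho ->
  V (dev mu (prod_marg pi)) i h rho - V (prod_marg pi) i h rho <= n%:R * eps /\ 0 <= eps.
Proof.
move=> gamma01 r_le nmg pi_valid cce mu_valid rho_dist.
have [E [E_irr pw r_sum0]] := zs_NMG_pairwise nmg.
have pw' K k (_ : (k < K)%N) := pw (h + k)%N isT.
have pi_valid' K k (_ : (k < K)%N) := pi_valid (h + k)%N isT.
have V_sum0 p : (forall t s, is_dist (p t s)) -> \sum_j V p j h rho = 0.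
  move=> p_dist; apply: sum_Vinf_eq0 => [j|t]; last exact: r_sum0.
  exact: disc_series_cvg gamma01 (r_le^~ j) p_dist rho_dist.
apply: (prod_marg_gap cce pi_valid mu_valid rho_dist isT).
- by apply: V_sum0 => t; apply: pi_valid.
- by apply: V_sum0 => t s; apply/prod_marg_dist/pi_valid.
- apply: eq_Vinf => k.
  exact: disc_term_dev_prod_marg E_irr (pw' k.+1) (pi_valid' k.+1) _ _ _ _ (ltnSn k).
- move=> j; apply: eq_Vinf => k.
  exact: disc_term_prod_marg E_irr (pw' k.+1) (pi_valid' k.+1) _ _ _ (ltnSn k).
Qed.

End InfiniteHorizon.

Unset Implicit Arguments.

Theorem proposition3 (R : realType) (n : nat) (S : finType) (A : 'I_n -> finType) :
  (* infinite horizon, time-independent P and r, discount 0 <= gamma < 1 *)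
  (forall (gamma eps : R) (P : S -> joint A -> S -> R)
          (r : 'I_n -> S -> joint A -> R) (pi : policy R S A),
     0 <= gamma < 1 ->
     (forall s a, is_dist (P s a)) ->
     zs_NMG predT (fun _ => P) (fun _ => r) gamma ->
     valid_policy predT pi ->
     is_CCE (Vinf (fun _ => P) (fun _ => r) gamma) predT eps pi ->
     is_NE (Vinf (fun _ => P) (fun _ => r) gamma) predT
           ((n.+1)%:R * eps / (1 - gamma)) (prod_marg pi))
  /\
  (* finite horizon H (steps 0 .. H-1) *)
  (forall (H : nat) (gamma eps : R) (P : trans R S A) (r : reward R S A)
          (pi : policy R S A),
     0 <= gamma <= 1 ->
     (forall h, (h < H)%N -> forall s a, is_dist (P h s a)) ->
     zs_NMG (fun h => (h < H)%N) P r gamma ->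
     valid_policy (fun h => (h < H)%N) pi ->
     is_CCE (Vfin H P r gamma) (fun h => (h < H)%N) eps pi ->
     is_NE (Vfin H P r gamma) (fun h => (h < H)%N)
           ((n.+1)%:R * H%:R * eps) (prod_marg pi)).
Proof.
split.
- move=> gamma eps P r pi gamma01 P_dist nmg pi_valid cce.
  split=> [i mu mu_valid rho rho_dist h _|]; last exact: prod_marg_is_product.
  pose M := \big[Order.max/0]_(u : 'I_n * S * joint A) `|r u.1.1 u.1.2 u.2|.
  have r_le (t : nat) j s a : `|r j s a| <= M.
    exact: (le_bigmax _ (fun u : 'I_n * S * joint A => `|r u.1.1 u.1.2 u.2|) (j, s, a)).
  have [gap eps_ge0] := Vinf_prod_marg_gap (fun _ => P_dist) h gamma01 r_le nmg
    pi_valid cce mu_valid rho_dist.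
  apply: le_trans gap _; case/andP: gamma01 => gamma_ge0 gamma_lt1.
  rewrite ler_pdivlMr ?subr_gt0 // -addn1 natrD.
  have : 0 <= n%:R * eps * gamma by rewrite !mulr_ge0.
  lra.
- move=> H gamma eps P r pi _ _ nmg pi_valid cce.
  split=> [i mu mu_valid rho rho_dist h hH|]; last exact: prod_marg_is_product.
  have [gap eps_ge0] := Vfin_prod_marg_gap nmg pi_valid cce mu_valid rho_dist hH.
  apply: le_trans gap _.
  have H_ge1 : 1 <= H%:R :> R by rewrite ler1n (leq_ltn_trans _ hH).
  have : 0 <= n.+1%:R * eps * (H%:R - 1) by rewrite !mulr_ge0 ?subr_ge0.
  rewrite -addn1 natrD; nra.
Qed.
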